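(* Let $Z=\{z_1,\dots,z_n\}$, $z_i=(y_i',x_i')'$, $y_i\in\mathbb{R}^q$, $x_i\in\mathbb{R}^p$, satisfy the multivariate linear model $y_i=B_0'x_i+u_i$, and let $\rho_0$ be a $\rho$-function. Let $(\tilde B_n,\tilde\Sigma_n)$ be estimates (functions of the sample) with values in $\mathbb{R}^{p\times q}\times\mathcal{S}_q$ and let $\hat\sigma_n=s\big(d_1(\tilde B_n,\tilde\Sigma_n),\dots,d_n(\tilde B_n,\tilde\Sigma_n)\big)$ be the M-scale of the Mahalanobis norms of the residuals. Then the explosion breakdown point of $\hat\sigma_n$ is bounded below by $\min(\varepsilon^*_n(Z,\tilde B_n,\tilde\Sigma_n),\,0.5)$.
   Context: $\mathcal{S}_q$ is the set of positive definite symmetric $q\times q$ matrices. A $\rho$-function is a continuous nondecreasing function of $|u|$ with $\rho(0)=0$, $\sup\rho=1$, strictly increasing on nonnegative $u$ with $\rho(u)<1$. $d_i(B,\Sigma)=((y_i-B'x_i)'\Sigma^{-1}(y_i-B'x_i))^{1/2}$. The M-scale $s(v)$ of $v=(v_1,\dots,v_n)$ solves $\frac1n\sum_i\rho_0(v_i/s)=0.5$ (or $s=0$ if at least half the $v_i$ are zero). Let $\mathcal{Z}_m$ be the set of samples $Z^*=\{z_1^*,\dots,z_n^*\}$ with $\#\{i:z_i=z_i^*\}\ge n-m$. The explosion breakdown point of $\hat\sigma_n$ is $m^*/n$ with $m^*=\min\{m:\sup_{Z^*\in\mathcal{Z}_m}\hat\sigma_n(Z^* )=\infty\}$. For $(\tilde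 B,\tilde\Sigma)$: $\varepsilon^*(Z,\tilde B)=m^*/n$ with $m^*=\min\{m:\sup_{Z^*\in\mathcal{Z}_m}\|\tilde B(Z^* )\|_2=\infty\}$ (Frobenius norm); $\varepsilon^*(Z,\tilde\Sigma)=m^*/n$ with $m^*=\min\{m:1/\inf_{Z^*\in\mathcal{Z}_m}\lambda_q(\tilde\Sigma(Z^* ))+\sup_{Z^*\in\mathcal{Z}_m}\lambda_1(\tilde\Sigma(Z^* ))=\infty\}$, $\lambda_1,\lambda_q$ the largest and smallest eigenvalues; $\varepsilon^*_n(Z,\tilde B,\tilde\Sigma)=\min\{\varepsilon^*(Z,\tilde B),\varepsilon^*(Z,\tilde\Sigma)\}$. *)

From HB Require Import structures.
From mathcomp Require Import all_boot all_order all_algebra.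
From mathcomp Require Import all_classical all_reals all_analysis.
Set Implicit Arguments. Unset Strict Implicit. Unset Printing Implicit Defensive.
Import Order.TTheory GRing.Theory Num.Theory.
Import numFieldNormedType.Exports.
Local Open Scope ring_scope.
Local Open Scope classical_set_scope.

Definition rho_function (R : realType) (rho : R -> R) : Prop :=
  continuous rho /\
  (forall u, rho u = rho `|u|) /\
  (forall u v, 0 <= u -> u <= v -> rho u <= rho v) /\
  rho 0 = 0 /\
  ereal_sup [set (rho u)%:E | u in [set: R]] = 1%:E /\
  (forall u v, 0 <= u -> u < v -> rho v < 1 -> rho u < rho v).

Definition posdef (R : realType) (q : nat) (S : 'M[R]_q) : Prop :=
  S^T = S /\ forall v : 'rV[R]_q, v != 0 -> 0 < (v *m S *m v^T) 0 0.

Definition Mscale (R : realType) (rho : R -> R) (n : nat) (v : 'I_n -> R) : R :=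
  if (n <= 2 * #|[pred i | v i == 0%R]|)%N then 0
  else xget 0 [set s : R | 0 < s /\
                 (n%:R)^-1 * (\sum_(i < n) rho (v i / s)) = 2^-1].

Definition sample (R : realType) (n p q : nat) := 'I_n -> 'cV[R]_q * 'cV[R]_p.

Definition mahal_dist (R : realType) (p q : nat) (B : 'M[R]_(p, q)) (S : 'M[R]_q)
  (z : 'cV[R]_q * 'cV[R]_p) : R :=
  let r := z.1 - B^T *m z.2 in Num.sqrt ((r^T *m invmx S *m r) 0 0).

Definition Zset (R : realType) (n p q : nat) (Z : sample R n p q) (m : nat)
  : set (sample R n p q) :=
  [set Z' | (n - m <= #|[pred i | Z i == Z' i]|)%N].

Definition frob (R : realType) (p q : nat) (B : 'M[R]_(p, q)) : R :=
  Num.sqrt (\sum_(i < p) \sum_(j < q) B i j ^+ 2).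

Definition lambda_max (R : realType) (q : nat) (S : 'M[R]_q) : \bar R :=
  ereal_sup [set a%:E | a in [set a : R | eigenvalue S a]].
Definition lambda_min (R : realType) (q : nat) (S : 'M[R]_q) : \bar R :=
  ereal_inf [set a%:E | a in [set a : R | eigenvalue S a]].

(* breakdown point m*/n, with m* the least m with the explosion property
   (+oo if there is no such m) *)
Definition bdp (R : realType) (n : nat) (expl : nat -> Prop) : \bar R :=
  ereal_inf [set (m%:R / n%:R : R)%:E | m in expl].

Definition explodes_scale (R : realType) (n p q : nat) (Z : sample R n p q)
  (sig : sample R n p q -> R) (m : nat) : Prop :=
  ereal_sup [set (sig Z')%:E | Z' in Zset Z m] = +oo%E.

Definition explodes_B (R : realType) (n p q : nat) (Z : sample R n p q)
  (Bt : sample R n p q -> 'M[R]_(p, q)) (m : nat) : Prop :=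
  ereal_sup [set (frob (Bt Z'))%:E | Z' in Zset Z m] = +oo%E.

(* 1 / inf lambda_q + sup lambda_1 = oo; since eigenvalues of matrices in S_q
   are positive, this means inf lambda_q = 0 or sup lambda_1 = +oo *)
Definition explodes_Sigma (R : realType) (n p q : nat) (Z : sample R n p q)
  (St : sample R n p q -> 'M[R]_q) (m : nat) : Prop :=
  ereal_inf [set lambda_min (St Z') | Z' in Zset Z m] = 0%E \/
  ereal_sup [set lambda_max (St Z') | Z' in Zset Z m] = +oo%E.

From HB Require Import structures.
From mathcomp Require Import all_boot all_order all_algebra.
From mathcomp Require Import all_classical all_reals all_analysis.
From mathcomp Require Import sesquilinear spectral.
From mathcomp.real_closed Require Import complex.
From mathcomp Require Import ring lra zify.
Set Implicit Arguments. Unset Strict Implicit. Unset Printing Implicit Defensive.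
Import Order.TTheory GRing.Theory Num.Theory.
Import numFieldNormedType.Exports.
Local Open Scope ring_scope.
Local Open Scope classical_set_scope.

(* Let m < n/2 be a contamination level at which neither B~ nor Sigma~ breaks
   down.  Over Z_m the Frobenius norm of B~ is then bounded and the eigenvalues
   of Sigma~ are bounded below by some l > 0, so every residual at one of the
   n - m uncontaminated points has Mahalanobis norm at most a constant K, since
   l r' Sigma^-1 r <= r' r.  In the M-scale equation (1/n) sum rho0(d_i/s) = 1/2
   the m contaminated points contribute at most m/n < 1/2, which forces
   rho0(K/s) >= (n - 2m)/(2n) > 0; as rho0 is continuous with rho0(0) = 0, K/s
   stays away from 0, i.e. s <= c K. *)

Lemma mulmx1_invmx (R : comUnitRingType) n (A B : 'M[R]_n) :
  A *m B = 1%:M -> invmx A = B.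
Proof.
by move=> AB; have [Au _] := mulmx1_unit AB; rewrite -[LHS]mulmx1 -AB mulmxA mulVmx ?mul1mx.
Qed.

Section NormalForm.
Local Open Scope sesquilinear_scope.
Variables (C : numClosedFieldType) (n : nat) (A : 'M[C]_n).
Hypothesis normalA : A \is normalmx.
Let P := spectralmx A.
Let d := spectral_diag A.

Let A_spectral : A = P^t* *m diag_mx d *m P.
Proof. by rewrite -invmx_unitary ?spectral_unitarymx //; exact/orthomx_spectralP. Qed.

Let PPt : P *m P^t* = 1%:M.
Proof. exact/unitarymxP/spectral_unitarymx. Qed.

Let PtP : P^t* *m P = 1%:M.
Proof. exact: mulmx1C PPt. Qed.

Lemma spectral_diag_eigenvalue i : eigenvalue A (d 0 i).
Proof.
apply/eigenvalueP; exists (row i P).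
  by rewrite -row_mul {1}A_spectral !mulmxA PPt mul1mx mul_diag_mx; apply/rowP => j; rewrite !mxE.
apply: contraTneq isT => rowi0.
have := congr1 (fun M : 'M[C]_n => M i i) PPt; rewrite /= !mxE eqxx big1 => [/eqP|k _].
  by rewrite eq_sym oner_eq0.
by have := congr1 (fun v : 'rV[C]_n => v 0 k) rowi0; rewrite !mxE => ->; rewrite mul0r.
Qed.

Lemma normalmx_invmx_form_le (l : C) : 0 < l -> (forall i, l <= d 0 i) ->
  forall r : 'cV[C]_n, l * (r^t* *m invmx A *m r) 0 0 <= (r^t* *m r) 0 0.
Proof.
move=> l_gt0 l_le_d r.
have d_gt0 i : 0 < d 0 i := lt_le_trans l_gt0 (l_le_d i).
pose e := \row_j (d 0 j)^-1.
have invA : invmx A = P^t* *m diag_mx e *m P.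
  apply: mulmx1_invmx; rewrite A_spectral !mulmxA -(mulmxA _ P) PPt mulmx1.
  rewrite -(mulmxA _ (diag_mx d)) mulmx_diag.
  have -> : \row_j (d 0 j * e 0 j) = const_mx 1.
    by apply/rowP => j; rewrite !mxE mulfV ?gt_eqF.
  by rewrite diag_const_mx mulmx1 PtP.
pose w := P *m r.
have r_w : r^t* *m P^t* = w^t* by rewrite /w trmx_mul map_mxM.
have -> : r^t* *m invmx A *m r = w^t* *m diag_mx e *m w by rewrite invA -r_w !mulmxA.
have -> : r^t* *m r = w^t* *m w by rewrite -r_w /w mulmxA -(mulmxA _ _ P) PtP mulmx1.
clearbody w; rewrite mul_mx_diag !mxE mulr_sumr; apply: ler_sum => k _; rewrite !mxE.
rewrite mulrAC mulrCA; apply: ler_piMr.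
  by have := mul_conjC_ge0 (w k 0)^*; rewrite conjCK.
by rewrite ler_pdivrMr ?mul1r.
Qed.

End NormalForm.

Section RealSymmetric.
Local Open Scope sesquilinear_scope.

(* Complexify, so as to use the spectral theorem for normal matrices. *)
Lemma symmetric_invmx_form_le (R : rcfType) q (S : 'M[R]_q) (l : R) :
  S^T = S -> 0 < l -> (forall a, eigenvalue S a -> l <= a) ->
  forall r : 'cV[R]_q, l * (r^T *m invmx S *m r) 0 0 <= (r^T *m r) 0 0.
Proof.
move=> symS l_gt0 l_le_eig r.
pose f := real_complex R.
have conj_f m p (M : 'M[R]_(m, p)) : (map_mx f M)^t* = map_mx f M^T.
  by apply/matrixP => i j; rewrite !mxE conj_Creal //; apply/complex_realP; exists (M j i).
have hermS : map_mx f S \is hermsymmx.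
  by apply/is_hermitianmxP; rewrite expr0 scale1r conj_f symS.
have l_le_d i : f l <= spectral_diag (map_mx f S) 0 i.
  have /mxOverP/(_ 0 i)/RRe_real d_real := hermitian_spectral_diag_real hermS.
  rewrite -d_real lecR; apply: l_le_eig.
  have := spectral_diag_eigenvalue (hermitian_normalmx hermS) i.
  by rewrite -d_real (eigenvalue_map f).
have := normalmx_invmx_form_le (hermitian_normalmx hermS) _ l_le_d (map_mx f r).
by rewrite ltcR conj_f -map_invmx -!map_mxM !mxE -rmorphM lecR; apply.
Qed.

End RealSymmetric.

Lemma ler_sum_term (R : numDomainType) (I : finType) (F : I -> R) i :
  (forall j, 0 <= F j) -> F i <= \sum_j F j.
Proof. by move=> F_ge0; rewrite (bigD1 i) //= lerDl sumr_ge0. Qed.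

Lemma ereal_sup_neq_pinfty_ubound (R : realType) (T : Type) (A : set T) (g : T -> R) :
  ereal_sup [set (g x)%:E | x in A] <> +oo%E -> exists M, forall x, A x -> g x <= M.
Proof.
have ub x : A x -> ((g x)%:E <= ereal_sup [set (g x)%:E | x in A])%E.
  by move=> Ax; apply: ereal_sup_ubound; exists x.
case: (ereal_sup _) ub => [M | | ] ub // _.
  by exists M => x Ax; rewrite -lee_fin ub.
by exists 0 => x Ax; have := ub x Ax; rewrite leeNy_eq.
Qed.

Lemma Mscale_le (R : realType) (rho : R -> R) n (v : 'I_n -> R) (b : R) : 0 <= b ->
  (forall s, 0 < s -> n%:R^-1 * \sum_(i < n) rho (v i / s) = 2^-1 -> s <= b) ->
  Mscale rho v <= b.
Proof.
move=> b_ge0 sol_le; rewrite /Mscale; case: ifP => // _.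
by case: xgetP => [s _ [s_gt0 sol]|_]; [exact: sol_le|].
Qed.

Section RhoFunction.
Variables (R : realType) (rho : R -> R).
Hypothesis rhoF : rho_function rho.

Lemma rho_function_ge0 u : 0 <= rho u.
Proof. by case: rhoF => _ [even [mono [rho0 _]]]; rewrite even -rho0; exact: mono. Qed.

Lemma rho_function_le1 u : rho u <= 1.
Proof.
case: rhoF => _ [_ [_ [_ [sup1 _]]]]; rewrite -lee_fin -sup1.
by apply: ereal_sup_ubound; exists u.
Qed.

Lemma rho_function_lt_near0 d : 0 < d ->
  exists2 t0 : R, 0 < t0 & forall t, 0 <= t -> t < t0 -> rho t < d.
Proof.
move=> d_gt0; have /cvgrPdist_lt/(_ d d_gt0)/nbhs_ballP[e /= e_gt0 near0] := rhoF.1 0.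
exists e => // t t_ge0 t_lt_e.
have := near0 t; rewrite /ball /= sub0r normrN ger0_norm // => /(_ t_lt_e).
by rewrite rhoF.2.2.2.1 sub0r normrN ger0_norm // rho_function_ge0.
Qed.

Lemma sum_rho_le n m (v : 'I_n -> R) (G : pred 'I_n) (K s : R) :
  (n - m <= #|G|)%N -> 0 < s -> (forall i, 0 <= v i) -> (forall i, G i -> v i <= K) ->
  \sum_(i < n) rho (v i / s) <= n%:R * rho (K / s) + m%:R.
Proof.
move=> card_G s_gt0 v_ge0 v_le_K; rewrite (bigID G) /=; apply: lerD.
  apply: (@le_trans _ _ (\sum_(i < n | G i) rho (K / s))).
    apply: ler_sum => i Gi; apply: rhoF.2.2.1; first exact: divr_ge0 (v_ge0 i) (ltW s_gt0).
    by rewrite ler_pM2r ?invr_gt0 ?v_le_K.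
  apply: (@le_trans _ _ (\sum_(i < n) rho (K / s))).
    rewrite [X in X <= _]big_mkcond /=; apply: ler_sum => i _.
    by case: (G i); rewrite ?rho_function_ge0.
  by rewrite sumr_const card_ord mulr_natl.
apply: (@le_trans _ _ (\sum_(i < n | ~~ G i) 1)).
  by apply: ler_sum => i _; exact: rho_function_le1.
rewrite sumr_const ler_nat.
have -> : #|(fun i : 'I_n => ~~ G i)| = #|[predC G]| by apply: eq_card.
have := cardC G; rewrite card_ord; move: card_G; move: #|G| #|[predC G]| => a b; lia.
Qed.

Lemma Mscale_uniform_bound n m : (2 * m < n)%N ->
  exists2 c : R, 0 <= c & forall (v : 'I_n -> R) (G : pred 'I_n) (K : R),
    (n - m <= #|G|)%N -> 0 <= K -> (forall i, 0 <= v i) ->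
    (forall i, G i -> v i <= K) -> Mscale rho v <= c * K.
Proof.
move=> m_lt; have n_gt0 : (0 : R) < n%:R by rewrite ltr0n (leq_ltn_trans (leq0n _) m_lt).
pose d : R := (n - 2 * m)%:R / (2 * n%:R).
have d_gt0 : 0 < d by rewrite divr_gt0 ?mulr_gt0 // ltr0n subn_gt0.
have [t0 t0_gt0 rho_lt_d] := rho_function_lt_near0 d_gt0.
exists t0^-1; first by rewrite invr_ge0 ltW.
move=> v G K card_G K_ge0 v_ge0 v_le_K.
apply: Mscale_le => [|s s_gt0 sol]; first by rewrite mulr_ge0 // invr_ge0 ltW.
rewrite leNgt; apply/negP => cK_lt_s.
have rho_Ks_lt_d : rho (K / s) < d.
  apply: rho_lt_d; first exact: divr_ge0 K_ge0 (ltW s_gt0).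
  by rewrite ltr_pdivrMr // -ltr_pdivrMl // mulrC.
have sum_eq : \sum_(i < n) rho (v i / s) = n%:R / 2.
  by rewrite -sol mulrA mulfV ?gt_eqF // mul1r.
have nd : n%:R * d = (n%:R - 2 * m%:R) / 2.
  by rewrite /d natrB ?(ltnW m_lt) // natrM; field; rewrite pnatr_eq0 -lt0n -(ltr0n R).
have := sum_rho_le card_G s_gt0 v_ge0 v_le_K; rewrite sum_eq.
have : n%:R * rho (K / s) < n%:R * d by rewrite ltr_pM2l.
rewrite nd; lra.
Qed.

End RhoFunction.

Lemma posdef_eigenvalue_gt0 (R : realType) q (S : 'M[R]_q) a :
  posdef S -> eigenvalue S a -> 0 < a.
Proof.
move=> [_ S_pos] /eigenvalueP [v vS v_neq0].
have vv_ge0 : 0 <= (v *m v^T) 0 0.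
  by rewrite mxE sumr_ge0 // => j _; rewrite mxE -expr2 sqr_ge0.
rewrite ltNge; apply: contraTN (S_pos v v_neq0) => a_le0.
by rewrite vS -scalemxAl mxE -leNgt mulr_le0_ge0.
Qed.

Lemma eigenvalue_uniform_lbound (R : realType) (T : Type) q (A : set T)
    (St : T -> 'M[R]_q) :
  (forall t, posdef (St t)) ->
  ereal_inf [set lambda_min (St t) | t in A] <> 0%E ->
  exists2 l : R, 0 < l & forall t, A t -> forall a, eigenvalue (St t) a -> l <= a.
Proof.
move=> St_pd; set L := ereal_inf _ => L_neq0.
have L_le t a : A t -> eigenvalue (St t) a -> (L <= a%:E)%E.
  move=> At eig_a; apply: (le_trans (ereal_inf_lbound _)); first by exists t.
  by apply: ereal_inf_lbound; exists a.
have L_ge0 : (0 <= L)%E.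
  apply: le_ereal_inf_tmp => _ [t At <-]; apply: le_ereal_inf_tmp => _ [a eig_a <-].
  by rewrite lee_fin ltW // (posdef_eigenvalue_gt0 (St_pd t)).
case: L L_neq0 L_ge0 L_le => [l | | ] // l_neq0 l_ge0 l_le.
- exists l => [|t At a eig_a]; last by rewrite -lee_fin (l_le t a).
  by rewrite lt_def -lee_fin l_ge0 andbT; apply/eqP => l0; apply: l_neq0; rewrite l0.
- by exists 1 => // t At a eig_a; have := l_le t a At eig_a.
Qed.

Lemma frob_entry_le (R : realType) p q (B : 'M[R]_(p, q)) i j : `|B i j| <= frob B.
Proof.
rewrite /frob -sqrtr_sqr; apply: ler_wsqrtr.
apply: (le_trans (@ler_sum_term _ _ (fun k => B i k ^+ 2) j _)) => [k|].
  exact: sqr_ge0.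
apply: (@ler_sum_term _ _ (fun i' => \sum_k B i' k ^+ 2) i) => i'.
by apply: sumr_ge0 => k _; exact: sqr_ge0.
Qed.

Lemma residual_sqnorm_le (R : realType) p q (B : 'M[R]_(p, q)) (y : 'cV[R]_q)
    (x : 'cV[R]_p) (KB : R) :
  frob B <= KB ->
  ((y - B^T *m x)^T *m (y - B^T *m x)) 0 0
    <= \sum_j (`|y j 0| + KB * \sum_k `|x k 0|) ^+ 2.
Proof.
move=> frob_le; have KB_ge0 : 0 <= KB := le_trans (sqrtr_ge0 _) frob_le.
rewrite mxE; apply: ler_sum => j _; rewrite !mxE -expr2 -real_normK ?num_real //.
have rhs_ge0 : 0 <= `|y j 0| + KB * \sum_k `|x k 0|.
  by rewrite addr_ge0 ?mulr_ge0 ?sumr_ge0.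
apply: lerXn2r; rewrite ?nnegrE //.
rewrite (le_trans (ler_normB _ _)) // lerD2l mulr_sumr.
apply: (le_trans (ler_norm_sum _ _ _)); apply: ler_sum => k _.
by rewrite !mxE normrM ler_wpM2r // (le_trans (frob_entry_le _ _ _)).
Qed.

Lemma mahal_dist_le (R : realType) p q (B : 'M[R]_(p, q)) (S : 'M[R]_q)
    (z : 'cV[R]_q * 'cV[R]_p) (KB l : R) :
  S^T = S -> 0 < l -> (forall a, eigenvalue S a -> l <= a) -> frob B <= KB ->
  mahal_dist B S z <= Num.sqrt ((\sum_j (`|z.1 j 0| + KB * \sum_k `|z.2 k 0|) ^+ 2) / l).
Proof.
move=> symS l_gt0 l_le_eig frob_le; apply: ler_wsqrtr; rewrite ler_pdivlMr // mulrC.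
exact: le_trans (symmetric_invmx_form_le symS l_gt0 l_le_eig _) (residual_sqnorm_le _ _ frob_le).
Qed.

Lemma scale_not_explodes (R : realType) n p q (Z : sample R n p q) (rho : R -> R)
    (Bt : sample R n p q -> 'M[R]_(p, q)) (St : sample R n p q -> 'M[R]_q) m :
  rho_function rho -> (forall Z', posdef (St Z')) -> (2 * m < n)%N ->
  ~ explodes_B Z Bt m -> ~ explodes_Sigma Z St m ->
  ~ explodes_scale Z (fun Z' => Mscale rho (fun i => mahal_dist (Bt Z') (St Z') (Z' i))) m.
Proof.
move=> rhoF St_pd m_lt B_bdd Sigma_bdd.
have [KB KB_ub] := ereal_sup_neq_pinfty_ubound B_bdd.
have [l l_gt0 l_le_eig] := eigenvalue_uniform_lbound St_pd (fun inf0 => Sigma_bdd (or_introl inf0)).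
pose res2 i := \sum_j (`|(Z i).1 j 0| + KB * \sum_k `|(Z i).2 k 0|) ^+ 2.
have res2_ge0 i : 0 <= res2 i by apply: sumr_ge0 => j _; exact: sqr_ge0.
have [c c_ge0 Mscale_le_c] := Mscale_uniform_bound rhoF m_lt.
apply/eqP; rewrite lt_eqF // (le_lt_trans _ (ltry (c * Num.sqrt ((\sum_i res2 i) / l)))) //.
apply: ge_ereal_sup => _ [Z' Z'_m <-]; rewrite lee_fin.
apply: (Mscale_le_c _ [pred i | Z i == Z' i]) => // [i|i /eqP <-]; first exact: sqrtr_ge0.
apply: le_trans (mahal_dist_le _ (St_pd Z').1 l_gt0 (l_le_eig Z' Z'_m) (KB_ub Z' Z'_m)) _.
apply/ler_wsqrtr/ler_wpM2r; first by rewrite invr_ge0 ltW.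
exact: ler_sum_term i res2_ge0.
Qed.

Lemma bdp_le {R : realType} {n : nat} (expl : nat -> Prop) m :
  expl m -> (bdp R n expl <= (m%:R / n%:R)%:E)%E.
Proof. by move=> expl_m; apply: ereal_inf_lbound; exists m. Qed.

Theorem lemma2 (R : realType) (n p q : nat) (Z : sample R n p q)
  (B0 : 'M[R]_(p, q)) (u : 'I_n -> 'cV[R]_q)
  (hmodel : forall i, (Z i).1 = B0^T *m (Z i).2 + u i)
  (rho0 : R -> R) (hrho : rho_function rho0)
  (Bt : sample R n p q -> 'M[R]_(p, q)) (St : sample R n p q -> 'M[R]_q)
  (hSt : forall Z', posdef (St Z'))
  (hn : (0 < n)%N) (hq : (0 < q)%N) :
  let sigma_hat := fun Z' : sample R n p q =>
    Mscale rho0 (fun i => mahal_dist (Bt Z') (St Z') (Z' i)) in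
  (Order.min (Order.min (bdp R n (explodes_B Z Bt)) (bdp R n (explodes_Sigma Z St)))
             (2^-1 : R)%:E
   <= bdp R n (explodes_scale Z sigma_hat))%E.
Proof.
cbv zeta; apply: le_ereal_inf_tmp => _ [m scale_expl <-].
have [half_le_m|m_lt] := leqP n (2 * m).
  rewrite ge_min; apply/orP; right; rewrite lee_fin ler_pdivlMr ?ltr0n //.
  by rewrite mulrC ler_pdivrMr // -natrM ler_nat mulnC.
have [B_expl|B_bdd] := pselect (explodes_B Z Bt m).
  by rewrite !ge_min (bdp_le B_expl).
have [S_expl|S_bdd] := pselect (explodes_Sigma Z St m).
  by rewrite !ge_min (bdp_le S_expl) orbT.
by case: (scale_not_explodes hrho hSt m_lt B_bdd S_bdd scale_expl).
Qed.
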